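(* Let $U$ be any finite set in a commutative group $G$ and $1<p<\infty$. Then \[ \beta_p(U)=\gamma_p(1_U),\qquad \beta'(U)=\gamma'(1_U),\qquad \beta''(U)=\gamma''(1_U). \]
   Context: Set functionals (with $A,B$ ranging over nonempty finite subsets of $G$): $\beta_p(U)=\inf_{A,B}\frac{|A+B+U|}{|A|^{1/p}|B|^{1-1/p}}$; $\beta'(U)=\inf_{A,B,|A|=|B|}\frac{|A+B+U|}{\sqrt{|A||B|}}$; $\beta''(U)=\inf_A\frac{|A+A+U|}{|A|}$. Functional versions: for nonnegative functions $f,g$ on $G$, the max-convolution is $(f\star g)(x)=\max_t f(t)g(x-t)$. For $t>0$ the level set of $f$ is $\{x: f(x)\ge t\}$ and its distribution function is $F(t)=|\{x:f(x)\ge t\}|$; $f\sim g$ (identically distributed) means their distribution functions coincide. For nonnegative $f\in\ell^1(G)$ and $q$ with $1/p+1/q=1$, with $g,h$ ranging over nonzero nonnegative functions in $\ell^1(G)$: $\gamma_p(f)=\inf_{g,h}\frac{\|f\star g\star h\|_1}{\|g\|_p\|h\|_q}$; $\gamma'(f)=\inf_{g\sim h}\frac{\|f\star g\star h\|_1}{\|g\|_2\|h\|_2}$; $\gamma''(f)=\inf_g\frac{\|f\star g\star g\|_1}{\|g\|_2^2}$. $1_U$ is the indicator function of $U$. *)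

From HB Require Import structures.
From mathcomp Require Import all_boot all_order all_algebra.
From mathcomp Require Import finmap.
From mathcomp Require Import all_classical all_reals.
From mathcomp Require Import ereal esum exp.
Set Implicit Arguments. Unset Strict Implicit. Unset Printing Implicit Defensive.
Import Order.TTheory GRing.Theory Num.Theory.
Local Open Scope ring_scope.
Local Open Scope classical_set_scope.
Local Open Scope fset_scope.

Definition sumset3 (G : zmodType) (A B U : {fset G}) : {fset G} :=
  [fset (x + u)%R | x in [fset (a + b)%R | a in A, b in B], u in U].

Definition beta_p (R : realType) (G : zmodType) (p : R) (U : {fset G}) : \bar R :=
  ereal_inf [set r | exists A B : {fset G}, A != fset0 /\ B != fset0 /\
     r = ((#|` sumset3 A B U|%:R : R) /
          (powR (#|` A|%:R) p^-1 * powR (#|` B|%:R) (1 - p^-1)))%:E].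

Definition beta' (R : realType) (G : zmodType) (U : {fset G}) : \bar R :=
  ereal_inf [set r | exists A B : {fset G}, A != fset0 /\ B != fset0 /\
     #|` A| = #|` B| /\
     r = ((#|` sumset3 A B U|%:R : R) / Num.sqrt (#|` A|%:R * #|` B|%:R))%:E].

Definition beta'' (R : realType) (G : zmodType) (U : {fset G}) : \bar R :=
  ereal_inf [set r | exists A : {fset G}, A != fset0 /\
     r = ((#|` sumset3 A A U|%:R : R) / #|` A|%:R)%:E].

(* max-convolution (f * g)(x) = max_t f(t) g(x - t); for nonnegative l^1
   functions the supremum is attained, so sup = max. *)
Definition maxconv (R : realType) (G : zmodType) (f g : G -> R) : G -> R :=
  fun x => sup [set f t * g (x - t) | t in [set: G]].

Definition admissible (R : realType) (G : zmodType) (g : G -> R) : Prop :=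
  (forall x, 0 <= g x) /\ (exists x, g x != 0) /\
  (\esum_(x in [set: G]) (g x)%:E < +oo)%E.

Definition l1norm (R : realType) (G : zmodType) (F : G -> R) : \bar R :=
  \esum_(x in [set: G]) (F x)%:E.

(* l^p norm of a nonnegative l^1 function (finite, since l^1 c l^p for p >= 1) *)
Definition lpnorm (R : realType) (G : zmodType) (p : R) (g : G -> R) : R :=
  powR (fine (\esum_(x in [set: G]) (powR (g x) p)%:E)) p^-1.

Definition ident_distr (R : realType) (G : zmodType) (g h : G -> R) : Prop :=
  forall t : R, 0 < t -> ([set x | t <= g x] #= [set x | t <= h x])%card.

Definition gamma_p (R : realType) (G : zmodType) (p : R) (f : G -> R) : \bar R :=
  let q := p / (p - 1) in
  ereal_inf [set r | exists g h : G -> R, admissible g /\ admissible h /\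
     r = (l1norm (maxconv (maxconv f g) h) * ((lpnorm p g * lpnorm q h)^-1)%:E)%E].

Definition gamma' (R : realType) (G : zmodType) (f : G -> R) : \bar R :=
  ereal_inf [set r | exists g h : G -> R, admissible g /\ admissible h /\
     ident_distr g h /\
     r = (l1norm (maxconv (maxconv f g) h) * ((lpnorm 2 g * lpnorm 2 h)^-1)%:E)%E].

Definition gamma'' (R : realType) (G : zmodType) (f : G -> R) : \bar R :=
  ereal_inf [set r | exists g : G -> R, admissible g /\
     r = (l1norm (maxconv (maxconv f g) g) * ((lpnorm 2 g ^+ 2)^-1)%:E)%E].

Definition indic (R : realType) (G : zmodType) (U : {fset G}) : G -> R :=
  fun x => if x \in U then 1 else 0.

From HB Require Import structures.
From mathcomp Require Import all_boot all_order all_algebra.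
From mathcomp Require Import finmap.
From mathcomp Require Import all_classical all_reals.
From mathcomp Require Import ereal esum exp hoelder.
From mathcomp Require Import zify ring.
Import Order.TTheory GRing.Theory Num.Theory.
Local Open Scope fset_scope.
Local Open Scope ring_scope.

(* The inequalities [gamma <= beta] hold because indicators are admissible: the max-convolution
   [1_U * 1_A * 1_B] is the indicator of [A + B + U], so every ratio defining [beta] also occurs
   in the definition of [gamma].
   Conversely, take nonnegative [g], [h] supported on finite sets and peel them: lower [g ^ p] by
   [c] and [h ^ q] by [d] on their supports, where [c] and [d] are at most the minima there.
   Hoelder's inequality for two terms gives [g a * h b >= g' a * h' b + c^(1/p) d^(1/q)] for the
   peeled functions [g'], [h'], so the max-convolution drops by at least [c^(1/p) d^(1/q)] on
   [supp g + supp h + U], a set of size at least [beta |supp g|^(1/p) |supp h|^(1/q)]. Choosing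
   [c], [d] so that [||g||_p^p] and [||h||_q^q] shrink by a common factor and one support loses a
   point, induction on the size of the supports adds up these layers to
   [||1_U * g * h||_1 >= beta ||g||_p ||h||_q]. For [beta'] and [beta''] one takes [p = q = 2] and
   [c = d]: the level sets of [g] and [h] then keep equal sizes (resp. stay equal), which is all
   those constants need. General [g], [h] are handled through their restrictions to finite sets,
   in the equal-size cases to level sets [{g >= e}] and [{h >= e}]. *)

Section PowR.
Variable R : realType.
Implicit Types p q r x y : R.

Lemma powR_powRV p y : 0 < p -> 0 <= y -> powR (powR y p^-1) p = y.
Proof. by move=> p0 y0; rewrite -powRrM mulVf ?gt_eqF // powRr1. Qed.

Lemma powRV_powR p y : 0 < p -> 0 <= y -> powR (powR y p) p^-1 = y.
Proof. by move=> p0 y0; rewrite -powRrM mulfV ?gt_eqF // powRr1. Qed.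

Lemma gt0_ler_powR_mono r : 0 < r -> {in Num.nneg &, {mono (@powR R)^~ r : x y / x <= y}}.
Proof. by move=> r0; apply: le_mono_in; exact: gt0_ltr_powR. Qed.

Definition geomean p q x y := powR x p^-1 * powR y q^-1.

Lemma geomean_ge0 p q x y : 0 <= geomean p q x y.
Proof. by rewrite mulr_ge0 ?powR_ge0. Qed.

Lemma geomean_id {p q x} : p^-1 + q^-1 = 1 -> 0 <= x -> geomean p q x x = x.
Proof. by move=> pq x0; rewrite /geomean -powRD ?pq ?oner_eq0 ?powRr1. Qed.

Lemma conjugate2 : (2 : R)^-1 + 2^-1 = 1.
Proof. by rewrite [RHS](splitr 1) div1r. Qed.

Lemma geomean2_id x : 0 <= x -> geomean 2 2 x x = x.
Proof. exact: geomean_id conjugate2. Qed.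

Lemma geomean_le_max p q x y : 0 < p -> 0 < q -> p^-1 + q^-1 = 1 -> 0 <= x -> 0 <= y ->
  geomean p q x y <= Num.max x y.
Proof.
move=> p0 q0 pq x0 y0; have m0 : 0 <= Num.max x y by rewrite le_max x0.
rewrite -[leRHS](geomean_id pq m0) /geomean; apply: ler_pM; rewrite ?powR_ge0 //.
  by apply: ge0_ler_powR; rewrite ?nnegrE ?invr_ge0 ?(ltW p0) // le_max lexx.
by apply: ge0_ler_powR; rewrite ?nnegrE ?invr_ge0 ?(ltW q0) // le_max lexx orbT.
Qed.

Lemma geomeanM p q x1 y1 x2 y2 : 0 <= x1 -> 0 <= y1 -> 0 <= x2 -> 0 <= y2 ->
  geomean p q x1 y1 * geomean p q x2 y2 = geomean p q (x1 * x2) (y1 * y2).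
Proof. by move=> *; rewrite /geomean !powRM // mulrACA. Qed.

Lemma geomeanZ p q l x y : p^-1 + q^-1 = 1 -> 0 <= l -> 0 <= x -> 0 <= y ->
  geomean p q (l * x) (l * y) = l * geomean p q x y.
Proof. by move=> pq *; rewrite -geomeanM ?geomean_id. Qed.

Lemma geomean0l p q y : 0 < p -> geomean p q 0 y = 0.
Proof. by move=> p0; rewrite /geomean powR0 ?mul0r // invr_eq0 gt_eqF. Qed.

Lemma geomean0r p q x : 0 < q -> geomean p q x 0 = 0.
Proof. by move=> q0; rewrite /geomean powR0 ?mulr0 // invr_eq0 gt_eqF. Qed.

Lemma geomean_split p q (t N M kA kB : R) : p^-1 + q^-1 = 1 ->
  0 <= t -> 0 <= N -> 0 <= M -> 0 < kA -> 0 < kB ->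
  geomean p q N M = (1 - t) * geomean p q N M +
    geomean p q (t * N / kA) (t * M / kB) * geomean p q kA kB.
Proof.
move=> pq t0 N0 M0 kA0 kB0.
rewrite geomeanM ?divr_ge0 ?mulr_ge0 ?(ltW kA0) ?(ltW kB0) //.
rewrite !divfK ?gt_eqF // geomeanZ //.
by rewrite -mulrDl subrK mul1r.
Qed.

Lemma uniform_peel_fraction (m n N M kA kB : R) : 0 < m -> 0 < n -> 0 < kA -> 0 < kB ->
  m * kA <= N -> n * kB <= M ->
  exists t, [/\ 0 <= t <= 1, 0 < t * N / kA <= m, 0 < t * M / kB <= n &
                t * N / kA = m \/ t * M / kB = n].
Proof.
move=> m0 n0 kA0 kB0 NmA MnB.
have N0 : 0 < N := lt_le_trans (mulr_gt0 m0 kA0) NmA.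
have M0 : 0 < M := lt_le_trans (mulr_gt0 n0 kB0) MnB.
set t := Num.min (m * kA / N) (n * kB / M).
have t0 : 0 < t by rewrite lt_min !divr_gt0 ?mulr_gt0.
exists t; split.
- by rewrite ltW //= /t ge_min ler_pdivrMr // mul1r NmA.
- by rewrite divr_gt0 ?mulr_gt0 //= ler_pdivrMr // -ler_pdivlMr // /t ge_min lexx.
- by rewrite divr_gt0 ?mulr_gt0 //= ler_pdivrMr // -ler_pdivlMr // /t ge_min lexx orbT.
have [mn|nm] := leP (m * kA / N) (n * kB / M);
  [left; rewrite /t min_l | right; rewrite /t min_r ?ltW] => //;
  by rewrite divfK ?mulfK ?gt_eqF.
Qed.

Lemma conjugate_exponent p : 1 < p ->
  [/\ 0 < p, 0 < p / (p - 1), p^-1 + (p / (p - 1))^-1 = 1 & (p / (p - 1))^-1 = 1 - p^-1].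
Proof.
move=> p1; have p0 : 0 < p := lt_trans ltr01 p1.
have qV : (p / (p - 1))^-1 = 1 - p^-1 by rewrite invf_div; field; rewrite gt_eqF.
split=> //; first by rewrite divr_gt0 // subr_gt0.
by rewrite qV addrC subrK.
Qed.

End PowR.
Arguments geomean {R}.
Arguments conjugate_exponent {R p}.
Arguments uniform_peel_fraction {R m n N M kA kB}.
Arguments geomean_split {R p q t N M kA kB}.
Arguments gt0_ler_powR_mono {R r}.
Arguments powR_powRV {R p y}.
Arguments powRV_powR {R p y}.

Section FinsetSums.
Variables (R : realType) (K : choiceType).
Implicit Types (X Y : {fset K}) (phi : K -> R).

Lemma sumr_const_fset X (d : R) : \sum_(x <- X) d = d *+ #|` X|.
Proof. by rewrite big_const_seq count_predT -Monoid.iteropE. Qed.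

Lemma sumr_fsubset_if X Y phi : Y `<=` X ->
  \sum_(x <- X) (if x \in Y then phi x else 0) = \sum_(x <- Y) phi x.
Proof.
move=> YX; rewrite -(big_fset_incl _ YX) => [|x _ /negbTE -> //].
by apply: eq_big_seq => x ->.
Qed.

Lemma sumr_mem_fset X Y (d : R) : Y `<=` X ->
  \sum_(x <- X) (if x \in Y then d else 0) = d *+ #|` Y|.
Proof. by move=> YX; rewrite (sumr_fsubset_if _ _ (fun=> d)) // sumr_const_fset. Qed.

Lemma ler_sum_fsubset X Y phi : X `<=` Y -> (forall x, 0 <= phi x) ->
  \sum_(x <- X) phi x <= \sum_(x <- Y) phi x.
Proof.
move=> XY phi0; rewrite -(sumr_fsubset_if _ _ phi XY).
by apply: ler_sum => x _; case: ifP.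
Qed.

Lemma fset1_neq0 (x : K) : [fset x] != fset0.
Proof. by apply/fset0Pn; exists x; rewrite inE. Qed.

Lemma fset_argmin phi X : X != fset0 ->
  exists2 a, a \in X & forall b, b \in X -> phi a <= phi b.
Proof.
case/fset0Pn => x xX.
case: (@arg_minP _ _ X [` xX] xpredT (fun i : X => phi (val i))) => //= i _ Hi.
by exists (val i) => [|b bX]; [exact: valP | exact: (Hi [` bX])].
Qed.

End FinsetSums.
Arguments fset_argmin {R K} phi {X}.
Arguments sumr_mem_fset {R K X Y} d.
Arguments ler_sum_fsubset {R K X Y phi}.

Section SumsetsAndMaxConvolutions.
Variables (R : realType) (G : zmodType) (U : {fset G}).
Implicit Types (p q : R) (g h : G -> R) (A B S T X Y : {fset G}).

Section Summability.
Local Open Scope classical_set_scope.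
Implicit Type F : G -> R.

Lemma fsum_le_esum F X :
  ((\sum_(x <- X) F x)%:E <= \esum_(x in [set: G]) (F x)%:E)%E.
Proof.
apply: esum_ge; exists [set` X]; first by split; [exact: finite_fset | exact: subsetT].
by rewrite fsbig_finite ?set_fsetK ?sumEFin //; exact: finite_fset.
Qed.

Lemma esum_le_of_fsum {F} {c : R} :
  (forall X, \sum_(x <- X) F x <= c) -> (\esum_(x in [set: G]) (F x)%:E <= c%:E)%E.
Proof.
move=> H; apply: ge_ereal_sup => _ [A [finA _] <-].
by rewrite fsbig_finite // sumEFin lee_fin.
Qed.

Lemma fsum_le_fine_esum {F} X : (forall x, 0 <= F x) ->
  (\esum_(x in [set: G]) (F x)%:E < +oo)%E ->
  \sum_(x <- X) F x <= fine (\esum_(x in [set: G]) (F x)%:E).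
Proof.
move=> F0 Ffin; have E0 : (0 <= \esum_(x in [set: G]) (F x)%:E)%E.
  by apply: esum_ge0 => x _; rewrite lee_fin.
by rewrite -lee_fin fineK ?fsum_le_esum // ge0_fin_numE.
Qed.

Lemma admissible_le_l1norm {g} x : admissible g -> g x <= fine (l1norm g).
Proof.
by case=> g0 [_ gfin]; have := fsum_le_fine_esum [fset x] g0 gfin; rewrite big_seq_fset1.
Qed.

Lemma admissible_powR_summable {g} {p : R} : admissible g -> 1 <= p ->
  (\esum_(x in [set: G]) (powR (g x) p)%:E < +oo)%E.
Proof.
move=> ag p1; have [g0 [_ gfin]] := ag; have p0 : 0 < p by apply: lt_le_trans p1.
set K := fine (l1norm g).
suff H : forall X, \sum_(x <- X) powR (g x) p <= powR K (p - 1) * K.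
  by apply: le_lt_trans (esum_le_of_fsum H) _; rewrite ltry.
move=> X; apply: le_trans (_ : \sum_(x <- X) (powR K (p - 1) * g x) <= _).
  apply: ler_sum => x _; rewrite -(mulr_powRB1 (g0 x) p0) mulrC ler_wpM2r //.
  have gK := admissible_le_l1norm x ag.
  by apply: ge0_ler_powR; rewrite ?nnegrE ?subr_ge0 // (le_trans (g0 x)).
by rewrite -mulr_sumr ler_wpM2l ?powR_ge0 ?fsum_le_fine_esum.
Qed.

Lemma admissible_powR_gt0 {g} {p : R} : admissible g -> 1 <= p ->
  0 < fine (\esum_(x in [set: G]) (powR (g x) p)%:E).
Proof.
move=> ag p1; have [g0 [[x0 gx0] _]] := ag.
apply: lt_le_trans (fsum_le_fine_esum [fset x0] _ (admissible_powR_summable ag p1)).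
  by rewrite big_seq_fset1 powR_gt0 // lt_def gx0 g0.
by move=> x; exact: powR_ge0.
Qed.

Lemma admissible_level_finite {g} {e : R} : admissible g -> 0 < e ->
  finite_set [set x | e <= g x].
Proof.
move=> ag e0; have [g0 [_ gfin]] := ag; set K := fine (l1norm g).
have K0 : 0 <= K := le_trans (g0 0) (admissible_le_l1norm 0 ag).
apply: contrapT => inf.
have [n Hn] : exists n : nat, K / e < n%:R.
  by exists (Num.Def.archi_bound (K / e)); apply: archi_boundP; rewrite divr_ge0 // ltW.
have [B BA Bn] := infinite_set_fset n inf.
have : e *+ #|` B| <= K.
  apply: le_trans (fsum_le_fine_esum B g0 gfin); rewrite -sumr_const_fset.
  by rewrite big_seq [leRHS]big_seq; apply: ler_sum => x /BA.
rewrite -mulr_natr mulrC -ler_pdivlMr // leNgt.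
by rewrite (lt_le_trans Hn) // ler_nat.
Qed.

Lemma mul_powR_fine_esum_le F (k r l : R) :
  (forall x, 0 <= F x) -> 0 <= k -> 0 < r ->
  (forall X, k * powR (\sum_(x <- X) F x) r <= l) ->
  k * powR (fine (\esum_(x in [set: G]) (F x)%:E)) r <= l.
Proof.
move=> F0 k0 r0 H.
have l0 : 0 <= l by have := H fset0; rewrite big_seq_fset0 powR0 ?gt_eqF // mulr0.
have [->|kn0] := eqVneq k 0; first by rewrite mul0r.
have kp : 0 < k by rewrite lt_def kn0.
rewrite mulrC -ler_pdivlMr //; set c := l / k.
have HX X : \sum_(x <- X) F x <= powR c r^-1.
  rewrite -(gt0_ler_powR_mono r0) ?nnegrE ?powR_ge0 ?sumr_ge0 // powR_powRV ?divr_ge0 //.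
  by rewrite /c ler_pdivlMr // mulrC.
have E := esum_le_of_fsum HX.
have E0 : (0 <= \esum_(x in [set: G]) (F x)%:E)%E by apply: esum_ge0 => x _; rewrite lee_fin.
have Efin : \esum_(x in [set: G]) (F x)%:E \is a fin_num.
  by rewrite ge0_fin_numE // (le_lt_trans E) ?ltry.
rewrite -[leRHS](powR_powRV r0) ?divr_ge0 // (gt0_ler_powR_mono r0) ?nnegrE ?fine_ge0 ?powR_ge0 //.
by rewrite -lee_fin fineK.
Qed.

End Summability.

Section Sumsets.
Implicit Types Z V : {fset G}.

Definition fsumset X Y : {fset G} := [fset x + y | x in X, y in Y].

Lemma mem_fsumset X Y z :
  reflect (exists x y, [/\ x \in X, y \in Y & z = x + y]) (z \in fsumset X Y).
Proof.
apply: (iffP idP) => [/imfset2P [x xX [y yY ->]]|[x [y [xX yY ->]]]]; first by exists x, y.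
by apply/imfset2P; exists x => //; exists y.
Qed.

Lemma fsumsetC X Y : fsumset X Y = fsumset Y X.
Proof.
by apply/fsetP => z; apply/mem_fsumset/mem_fsumset => -[x [y [xX yY ->]]];
  exists y, x; rewrite addrC.
Qed.

Lemma fsumsetA X Y Z : fsumset X (fsumset Y Z) = fsumset (fsumset X Y) Z.
Proof.
apply/fsetP => w; apply/mem_fsumset/mem_fsumset.
  case=> x [_ [xX /mem_fsumset [y [z [yY zZ ->]]] ->]].
  by exists (x + y), z; split=> //; [apply/mem_fsumset; exists x, y | rewrite addrA].
case=> _ [z [/mem_fsumset [x [y [xX yY ->]]] zZ ->]].
by exists x, (y + z); split=> //; [apply/mem_fsumset; exists y, z | rewrite addrA].
Qed.

Lemma fsumsetS X Y X' Y' : X `<=` X' -> Y `<=` Y' -> fsumset X Y `<=` fsumset X' Y'.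
Proof.
move=> /fsubsetP XX' /fsubsetP YY'; apply/fsubsetP => _ /mem_fsumset [x [y [xX yY ->]]].
by apply/mem_fsumset; exists x, y; split; [apply: XX' | apply: YY' |].
Qed.

Lemma sumset3E A B V : sumset3 A B V = fsumset (fsumset A B) V.
Proof. by []. Qed.

Lemma sumset3S {A B A' B'} V : A `<=` A' -> B `<=` B' -> sumset3 A B V `<=` sumset3 A' B' V.
Proof. by move=> AA' BB'; rewrite !sumset3E !fsumsetS. Qed.

Lemma sumset3C A B V : sumset3 A B V = sumset3 B A V.
Proof. by rewrite !sumset3E [fsumset A B]fsumsetC. Qed.

Lemma mem_sumset3 A B V x :
  reflect (exists a b v, [/\ a \in A, b \in B, v \in V & x = a + b + v])
          (x \in sumset3 A B V).
Proof.
rewrite sumset3E; apply: (iffP (mem_fsumset _ _ _)).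
  by case=> _ [v [/mem_fsumset [a [b [aA bB ->]]] vV ->]]; exists a, b, v.
by case=> a [b [v [aA bB vV ->]]]; exists (a + b), v; split=> //; apply/mem_fsumset; exists a, b.
Qed.

End Sumsets.

Section MaxConvolution.
Local Open Scope classical_set_scope.
Implicit Types (f : G -> R) (V : {fset G}).

(* [sup] of a set that is not bounded above is a junk value, hence the bound [K]. *)
Lemma le_maxconv {f g x} t {K : R} :
  (forall s, f s * g (x - s) <= K) -> f t * g (x - t) <= maxconv f g x.
Proof. by move=> HK; apply: ub_le_sup; [exists K => _ [s _ <-] | exists t]. Qed.

Lemma maxconv_le {f g x} {K : R} :
  (forall s, f s * g (x - s) <= K) -> maxconv f g x <= K.
Proof. by move=> HK; apply: ge_sup; [exists (f 0 * g (x - 0)), 0 | move=> _ [s _ <-]]. Qed.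

Lemma maxconv_bounds {f g} {Kf Kg : R} :
  (forall x, 0 <= f x <= Kf) -> (forall x, 0 <= g x <= Kg) ->
  forall x, 0 <= maxconv f g x <= Kf * Kg.
Proof.
move=> Hf Hg x.
have HK s : f s * g (x - s) <= Kf * Kg.
  by have /andP[? ?] := Hf s; have /andP[? ?] := Hg (x - s); rewrite ler_pM.
apply/andP; split; last exact: maxconv_le.
apply: le_trans (le_maxconv 0 HK).
by have /andP[? _] := Hf 0; have /andP[? _] := Hg (x - 0); rewrite mulr_ge0.
Qed.

Lemma indic_bounds V x : 0 <= indic R V x <= 1.
Proof. by rewrite /indic; case: ifP; rewrite lexx ler01. Qed.

Lemma admissible_bounds {g} : admissible g -> forall x, 0 <= g x <= fine (l1norm g).
Proof. by move=> ag x; rewrite ag.1 admissible_le_l1norm. Qed.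

Lemma maxconv_indic_ge0 {g h} x : admissible g -> admissible h ->
  0 <= maxconv (maxconv (indic R U) g) h x.
Proof.
move=> ag ah; have Hg := maxconv_bounds (indic_bounds U) (admissible_bounds ag).
by have /andP[] := maxconv_bounds Hg (admissible_bounds ah) x.
Qed.

Lemma le_maxconv_indic g h u a b : admissible g -> admissible h -> u \in U ->
  g a * h b <= maxconv (maxconv (indic R U) g) h (a + b + u).
Proof.
move=> ag ah uU; set Kg := fine (l1norm g).
have Hg s : indic R U s * g (a + u - s) <= 1 * Kg.
  by have /andP[? ?] := indic_bounds U s; have /andP[? ?] := admissible_bounds ag (a + u - s);
    rewrite ler_pM.
have Hh s : maxconv (indic R U) g s * h (a + b + u - s) <= 1 * Kg * fine (l1norm h).
  have /andP[? ?] := maxconv_bounds (indic_bounds U) (admissible_bounds ag) s.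
  by have /andP[? ?] := admissible_bounds ah (a + b + u - s); rewrite ler_pM.
apply: le_trans (le_maxconv (a + u) Hh).
have -> : a + b + u - (a + u) = b by rewrite (addrAC a b u) addrC addrK.
rewrite ler_wpM2r ?ah.1 //.
by have := le_maxconv u Hg; rewrite /indic uU mul1r addrK.
Qed.

Lemma maxconv_indic X Y : maxconv (indic R X) (indic R Y) = indic R (fsumset X Y).
Proof.
apply/funext => z.
have ub s : indic R X s * indic R Y (z - s) <= 1 * 1.
  by have /andP[? ?] := indic_bounds X s; have /andP[? ?] := indic_bounds Y (z - s); rewrite ler_pM.
have /andP[F0 F1] := maxconv_bounds (indic_bounds X) (indic_bounds Y) z.
rewrite [RHS]/indic; apply/eqP; rewrite eq_le; case: ifPn => [|zXY].
  case/mem_fsumset=> x [y [xX yY zE]]; rewrite -[1 in leRHS]mul1r F1 /=.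
  by have := le_maxconv x ub; rewrite zE [x + y - x]addrC addKr /indic xX yY mulr1.
rewrite F0 andbT; apply: maxconv_le => s; rewrite /indic.
case: ifP => sX; case: ifP => sY; rewrite ?mulr0 ?mul0r //.
by case/negP: zXY; apply/mem_fsumset; exists s, (z - s); rewrite addrCA subrr addr0.
Qed.

Lemma l1norm_indic Y : l1norm (indic R Y) = (#|` Y|%:R)%:E.
Proof.
apply/eqP; rewrite eq_le; apply/andP; split.
  apply: esum_le_of_fsum => X; rewrite -(sumr_mem_fset 1 (fsubsetUr X Y)).
  by apply: ler_sum_fsubset (fsubsetUl X Y) _ => x; have /andP[] := indic_bounds Y x.
by have := fsum_le_esum (indic R Y) Y; rewrite /indic (sumr_mem_fset 1 (fsubset_refl Y)).
Qed.

Lemma lpnorm_indic (p : R) Y : 0 < p -> lpnorm p (indic R Y) = powR (#|` Y|%:R) p^-1.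
Proof.
move=> p0; rewrite /lpnorm (eq_esum (b := fun x => (indic R Y x)%:E)).
  by have := l1norm_indic Y; rewrite /l1norm => ->.
by move=> x _; rewrite /indic; case: ifP => _; rewrite ?powR1 ?powR0 // gt_eqF.
Qed.

Lemma admissible_indic X : X != fset0 -> admissible (indic R X).
Proof.
case/fset0Pn => x xX; split=> [y|]; first by have /andP[] := indic_bounds X y.
split; first by exists x; rewrite /indic xX oner_neq0.
by have := l1norm_indic X; rewrite /l1norm => ->; exact: ltry.
Qed.

Lemma ident_distr_indic X Y : #|` X| = #|` Y| -> ident_distr (indic R X) (indic R Y).
Proof.
move=> eXY t t0; have [t1|t1] := leP t 1.
  have E (Z : {fset G}) : [set x | t <= indic R Z x] = [set` Z].
    apply/seteqP; split => x /=; last by move=> xZ; rewrite /indic xZ.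
    by rewrite /indic; case: ifP => // _; rewrite leNgt t0.
  have cX : ([set` X] #= `I_#|` X|)%card by exact/card_eq_fsetP.
  have cY : ([set` Y] #= `I_#|` X|)%card by exact/card_eq_fsetP.
  by rewrite !E; exact: card_eq_trans cX (card_esym cY).
have E (Z : {fset G}) : [set x | t <= indic R Z x] = set0.
  apply/seteqP; split => x //= H.
  by have /andP[_ x1] := indic_bounds Z x; move: (le_trans H x1); rewrite leNgt t1.
by rewrite !E; exact: card_eq00.
Qed.

End MaxConvolution.

Section PowerSums.
Implicit Types c t : R.

Definition supp S g : {fset G} := [fset a in S | 0 < g a].

Lemma mem_supp S g a : (a \in supp S g) = (a \in S) && (0 < g a).
Proof. by rewrite !inE. Qed.

Lemma supp_sub S g : supp S g `<=` S.
Proof. by apply/fsubsetP => a; rewrite mem_supp => /andP[]. Qed.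

Lemma supp_gt0 {S g a} : a \in supp S g -> 0 < g a.
Proof. by rewrite mem_supp => /andP[]. Qed.

Lemma notin_supp_eq0 {S g a} : (forall x, 0 <= g x) -> a \in S -> a \notin supp S g -> g a = 0.
Proof. by move=> g0 aS; rewrite mem_supp aS /= => ga; apply/eqP; rewrite eq_le g0 leNgt ga. Qed.

Definition sumpow p S g : R := \sum_(a <- S) powR (g a) p.

Lemma sumpow_ge0 p S g : 0 <= sumpow p S g.
Proof. by apply: sumr_ge0 => a _; exact: powR_ge0. Qed.

Lemma sumpow_supp {p S g} : 0 < p -> (forall x, 0 <= g x) ->
  sumpow p S g = sumpow p (supp S g) g.
Proof.
move=> p0 g0; rewrite /sumpow (big_fset_incl _ (supp_sub S g)) // => a aS an.
by rewrite (notin_supp_eq0 g0 aS an) powR0 // gt_eqF.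
Qed.

Lemma sumpow_supp0 {p S g} : 0 < p -> (forall x, 0 <= g x) -> supp S g = fset0 ->
  sumpow p S g = 0.
Proof. by move=> p0 g0 E; rewrite (sumpow_supp p0) // E /sumpow big_seq_fset0. Qed.

Lemma sumpow_ge p S g m : 0 < p -> (forall x, 0 <= g x) ->
  (forall a, a \in supp S g -> m <= powR (g a) p) -> m *+ #|` supp S g| <= sumpow p S g.
Proof.
move=> p0 g0 H; rewrite (sumpow_supp p0) // -sumr_const_fset.
by rewrite big_seq [leRHS]big_seq; apply: ler_sum => a; exact: H.
Qed.

Definition peel p c g (x : G) : R := powR (Num.max (powR (g x) p - c) 0) p^-1.

Lemma peel_ge0 p c g x : 0 <= peel p c g x.
Proof. exact: powR_ge0. Qed.

Lemma powR_peel p c g x : 0 < p -> powR (peel p c g x) p = Num.max (powR (g x) p - c) 0.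
Proof. by move=> p0; rewrite powR_powRV // le_max lexx orbT. Qed.

Lemma peel_le p c g x : 0 < p -> 0 <= c -> 0 <= g x -> peel p c g x <= g x.
Proof.
move=> p0 c0 gx0; rewrite -[leRHS](powRV_powR p0 gx0).
apply: ge0_ler_powR; rewrite ?invr_ge0 ?(ltW p0) ?nnegrE ?le_max ?lexx ?orbT ?powR_ge0 //.
by rewrite ge_max gerBl c0 /=; exact: powR_ge0.
Qed.

Lemma peel_eq0 p c g x : 0 < p -> powR (g x) p <= c -> peel p c g x = 0.
Proof.
move=> p0 gc; rewrite /peel (_ : Num.max _ _ = 0) ?powR0 ?invr_eq0 ?gt_eqF //.
by apply/max_idPr; rewrite subr_le0.
Qed.

Lemma notin_supp_peel {p c S g a} : 0 < p -> 0 <= c -> (forall x, 0 <= g x) ->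
  a \in S -> a \notin supp S g -> peel p c g a = 0.
Proof.
by move=> p0 c0 g0 aS an; rewrite peel_eq0 // (notin_supp_eq0 g0 aS an) powR0 ?gt_eqF.
Qed.

Lemma supp_peel {p c} S {g} : 0 < p -> 0 <= c -> (forall x, 0 <= g x) ->
  supp S (peel p c g) `<=` supp S g.
Proof.
move=> p0 c0 g0; apply/fsubsetP => a; rewrite !mem_supp => /andP[aS pa]; rewrite aS /=.
by apply: lt_le_trans pa _; apply: peel_le.
Qed.

Lemma card_supp_peel_lt {p c S g a} : 0 < p -> 0 <= c -> (forall x, 0 <= g x) ->
  a \in supp S g -> powR (g a) p = c -> (#|` supp S (peel p c g)| < #|` supp S g|)%N.
Proof.
move=> p0 c0 g0 aA e; rewrite (cardfsD1 a (supp S g)) aA add1n ltnS.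
apply/fsubset_leq_card/fsubsetP => y yin.
rewrite in_fsetD1 (fsubsetP (supp_peel S p0 c0 g0) y yin) andbT.
by apply: contraTneq yin => ->; rewrite mem_supp peel_eq0 ?e // ltxx andbF.
Qed.

Lemma sumpow_peel {p c S g} : 0 < p -> 0 <= c -> (forall x, 0 <= g x) ->
  (forall a, a \in supp S g -> c <= powR (g a) p) ->
  sumpow p S (peel p c g) = sumpow p S g - c *+ #|` supp S g|.
Proof.
move=> p0 c0 g0 Hc; rewrite (sumpow_supp p0 g0) /sumpow -sumr_const_fset -sumrB.
rewrite -(big_fset_incl _ (supp_sub S g)) => [|a aS an]; last first.
  by rewrite (notin_supp_peel p0 c0 g0 aS an) powR0 ?gt_eqF.
apply: eq_big_seq => a aA; rewrite powR_peel // max_l // subr_ge0; exact: Hc.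
Qed.

Definition level S g t : {fset G} := [fset a in S | t <= g a].

Lemma mem_level S g t a : (a \in level S g t) = (a \in S) && (t <= g a).
Proof. by rewrite !inE. Qed.

Lemma level_sub_supp S g {t} : 0 < t -> level S g t `<=` supp S g.
Proof.
move=> t0; apply/fsubsetP => a; rewrite mem_level mem_supp => /andP[-> ta] /=.
exact: lt_le_trans ta.
Qed.

Lemma level_supp S g t : 0 < t -> (forall a, a \in supp S g -> t <= g a) ->
  level S g t = supp S g.
Proof.
move=> t0 H; apply/eqP; rewrite eqEfsubset level_sub_supp //=.
by apply/fsubsetP => a aA; rewrite mem_level H // andbT (fsubsetP (supp_sub S g)).
Qed.

Lemma card_level_lt {S g t a} : 0 < t -> a \in supp S g -> g a < t ->
  (#|` level S g t| < #|` supp S g|)%N.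
Proof.
move=> t0 aA gat; rewrite (cardfsD1 a (supp S g)) aA add1n ltnS.
apply/fsubset_leq_card/fsubsetP => y yin.
rewrite in_fsetD1 (fsubsetP (level_sub_supp S g t0) y yin) andbT.
by apply: contraTneq yin => ->; rewrite mem_level leNgt gat andbF.
Qed.

Lemma level_peel p c S g t : 0 < p -> 0 < t -> 0 <= c -> (forall x, 0 <= g x) ->
  level S (peel p c g) t = level S g (powR (powR t p + c) p^-1).
Proof.
move=> p0 t0 c0 g0; apply/fsetP => a; rewrite !mem_level; congr (_ && _).
have tp : 0 < powR t p by apply: powR_gt0.
have tpc : 0 <= powR t p + c by rewrite addr_ge0 // ltW.
rewrite -(gt0_ler_powR_mono p0) ?nnegrE ?(ltW t0) ?peel_ge0 //.
rewrite powR_peel // le_max [powR t p <= 0]leNgt tp orbF lerBrDr.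
by rewrite -[in RHS](gt0_ler_powR_mono p0) ?nnegrE ?powR_ge0 ?g0 // powR_powRV.
Qed.

End PowerSums.

Definition fmaxconv S T g h (x : G) : R :=
  \big[Num.max/0]_(u <- U) \big[Num.max/0]_(a <- S) \big[Num.max/0]_(b <- T)
     (if a + b + u == x then g a * h b else 0).

Lemma le_fmaxconv {S T g h x u a b} : u \in U -> a \in S -> b \in T -> a + b + u = x ->
  g a * h b <= fmaxconv S T g h x.
Proof.
move=> uU aS bT e; rewrite /fmaxconv.
apply: le_trans (le_bigmax_seq _ _ xpredT _ uU isT).
apply: le_trans (le_bigmax_seq _ _ xpredT _ aS isT).
apply: le_trans (le_bigmax_seq _ _ xpredT _ bT isT).
by rewrite e eqxx.
Qed.

Lemma fmaxconv_le {S T g h x} {c : R} : 0 <= c ->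
  (forall u a b, u \in U -> a \in S -> b \in T -> a + b + u = x -> g a * h b <= c) ->
  fmaxconv S T g h x <= c.
Proof.
move=> c0 H; rewrite /fmaxconv big_seq_cond; apply: bigmax_le => // u /andP[uU _].
rewrite big_seq_cond; apply: bigmax_le => // a /andP[aS _].
rewrite big_seq_cond; apply: bigmax_le => // b /andP[bT _].
by case: eqP => [e|_]; [exact: H e | exact: c0].
Qed.

Lemma fmaxconv_ge0 S T g h x : 0 <= fmaxconv S T g h x.
Proof.
rewrite /fmaxconv; apply: (big_rec (fun y => 0 <= y)) => // u y _ y0.
by rewrite le_max y0 orbT.
Qed.

Lemma fmaxconvC S T g h x : fmaxconv S T g h x = fmaxconv T S h g x.
Proof.
apply/eqP; rewrite eq_le; apply/andP; split;
  apply: fmaxconv_le => [|u a b uU aS bT e]; rewrite ?fmaxconv_ge0 // mulrC;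
  by apply: (le_fmaxconv uU bT aS); rewrite -e (addrC b).
Qed.

Lemma fmaxconv_le_maxconv S T g h x : admissible g -> admissible h ->
  fmaxconv S T g h x <= maxconv (maxconv (indic R U) g) h x.
Proof.
move=> ag ah; apply: fmaxconv_le (maxconv_indic_ge0 x ag ah) _ => u a b uU _ _ <-.
exact: le_maxconv_indic.
Qed.

Lemma sum_fmaxconv_le S T {g h} {l : R} : admissible g -> admissible h ->
  l1norm (maxconv (maxconv (indic R U) g) h) = l%:E ->
  \sum_(x <- sumset3 S T U) fmaxconv S T g h x <= l.
Proof.
move=> ag ah Ll; rewrite -lee_fin -Ll; apply: le_trans (fsum_le_esum _ (sumset3 S T U)).
by rewrite lee_fin; apply: ler_sum => x _; exact: fmaxconv_le_maxconv.
Qed.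

Definition peelable p S g (c : R) := 0 < c /\ forall a, a \in supp S g -> c <= powR (g a) p.

Lemma peel_holder p q (c d : R) g h a b : 0 < p -> 0 < q -> p^-1 + q^-1 = 1 ->
  0 <= c -> 0 <= d -> 0 <= g a -> 0 <= h b -> c <= powR (g a) p -> d <= powR (h b) q ->
  peel p c g a * peel q d h b + geomean p q c d <= g a * h b.
Proof.
move=> p0 q0 pq c0 d0 ga0 hb0 cg dh.
have := hoelder2 (peel_ge0 p c g a) (powR_ge0 c p^-1) (peel_ge0 q d h b)
  (powR_ge0 d q^-1) p0 q0 pq.
rewrite !powR_peel // !powR_powRV // !max_l ?subr_ge0 // !subrK.
by rewrite !powRV_powR.
Qed.

Lemma fmaxconv_peel p q S T g h (c d : R) x : 0 < p -> 0 < q -> p^-1 + q^-1 = 1 ->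
  (forall x, 0 <= g x) -> (forall x, 0 <= h x) -> peelable p S g c -> peelable q T h d ->
  fmaxconv S T (peel p c g) (peel q d h) x +
    (if x \in sumset3 (supp S g) (supp T h) U then geomean p q c d else 0)
  <= fmaxconv S T g h x.
Proof.
move=> p0 q0 pq g0 h0 [/ltW c0 Hc] [/ltW d0 Hd].
have holder a b : a \in supp S g -> b \in supp T h ->
    peel p c g a * peel q d h b + geomean p q c d <= g a * h b.
  by move=> aA bB; apply: peel_holder; rewrite ?Hc ?Hd.
have F0 := fmaxconv_ge0 S T g h x.
case: ifP => [/mem_sumset3 [a [b [u [aA bB uU ->]]]] | _]; last first.
  rewrite addr0; apply: fmaxconv_le F0 _ => u a b uU aS bT e.
  by apply: le_trans (le_fmaxconv uU aS bT e); rewrite ler_pM ?peel_ge0 ?peel_le.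
have [aS bT] := (fsubsetP (supp_sub S g) a aA, fsubsetP (supp_sub T h) b bB).
have d_le : geomean p q c d <= fmaxconv S T g h (a + b + u).
  apply: le_trans (le_fmaxconv uU aS bT erefl); apply: le_trans (holder _ _ aA bB).
  by rewrite lerDr mulr_ge0 ?peel_ge0.
rewrite -lerBrDr; apply: fmaxconv_le => [|u' a' b' uU' aS' bT' e]; first by rewrite subr_ge0.
have [aA'|aA'] := boolP (a' \in supp S g); last first.
  by rewrite (notin_supp_peel p0 c0 g0 aS' aA') mul0r subr_ge0.
have [bB'|bB'] := boolP (b' \in supp T h); last first.
  by rewrite (notin_supp_peel q0 d0 h0 bT' bB') mulr0 subr_ge0.
by rewrite lerBrDr; apply: le_trans (holder _ _ aA' bB') (le_fmaxconv uU' aS' bT' e).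
Qed.

Lemma sum_fmaxconv_peel {p q S T g h} {c d : R} : 0 < p -> 0 < q -> p^-1 + q^-1 = 1 ->
  (forall x, 0 <= g x) -> (forall x, 0 <= h x) -> peelable p S g c -> peelable q T h d ->
  \sum_(x <- sumset3 S T U) fmaxconv S T (peel p c g) (peel q d h) x +
    geomean p q c d *+ #|` sumset3 (supp S g) (supp T h) U|
  <= \sum_(x <- sumset3 S T U) fmaxconv S T g h x.
Proof.
move=> *; rewrite -(sumr_mem_fset _ (sumset3S U (supp_sub S g) (supp_sub T h))) -big_split.
by apply: ler_sum => x _; apply: fmaxconv_peel.
Qed.

(* One step of the induction on [#|supp S g| + #|supp T h|], for an invariant [Q] and a
   potential [Phi]. *)
Definition peeling_step p q S T (Q : (G -> R) -> (G -> R) -> Prop)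
    (Phi : (G -> R) -> (G -> R) -> R) g h (c d : R) :=
  [/\ peelable p S g c, peelable q T h d,
      (exists2 a, a \in supp S g & powR (g a) p = c) \/
      (exists2 b, b \in supp T h & powR (h b) q = d),
      Q (peel p c g) (peel q d h) &
      Phi g h <= Phi (peel p c g) (peel q d h) +
                 geomean p q c d *+ #|` sumset3 (supp S g) (supp T h) U|].

Lemma sum_fmaxconv_ge_peeling {p q S T Q Phi} : 0 < p -> 0 < q -> p^-1 + q^-1 = 1 ->
  (forall g h, Q g h -> (forall x, 0 <= g x) -> (forall x, 0 <= h x) ->
     supp S g = fset0 \/ supp T h = fset0 -> Phi g h <= 0) ->
  (forall g h, Q g h -> (forall x, 0 <= g x) -> (forall x, 0 <= h x) ->
     supp S g != fset0 -> supp T h != fset0 ->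
     exists c d, peeling_step p q S T Q Phi g h c d) ->
  forall g h, Q g h -> (forall x, 0 <= g x) -> (forall x, 0 <= h x) ->
    Phi g h <= \sum_(x <- sumset3 S T U) fmaxconv S T g h x.
Proof.
move=> p0 q0 pq Hempty Hstep.
suff H n g h : (#|` supp S g| + #|` supp T h| < n)%N -> Q g h ->
    (forall x, 0 <= g x) -> (forall x, 0 <= h x) ->
    Phi g h <= \sum_(x <- sumset3 S T U) fmaxconv S T g h x.
  by move=> g h; apply: H (ltnSn _).
elim: n g h => [//|n IH] g h Hn HQ g0 h0.
have sum0 : 0 <= \sum_(x <- sumset3 S T U) fmaxconv S T g h x.
  by apply: sumr_ge0 => x _; exact: fmaxconv_ge0.
have [Eg|Eg] := eqVneq (supp S g) fset0.
  by apply: le_trans (Hempty _ _ HQ g0 h0 _) sum0; left.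
have [Eh|Eh] := eqVneq (supp T h) fset0.
  by apply: le_trans (Hempty _ _ HQ g0 h0 _) sum0; right.
have [c [d [[c0 Hc] [d0 Hd] Hex HQ' HPhi]]] := Hstep g h HQ g0 h0 Eg Eh.
apply: le_trans HPhi _.
apply: le_trans (sum_fmaxconv_peel p0 q0 pq g0 h0 (conj c0 Hc) (conj d0 Hd)).
rewrite lerD2r; apply: IH HQ' (peel_ge0 p c g) (peel_ge0 q d h).
have sg := fsubset_leq_card (supp_peel S p0 (ltW c0) g0).
have sh := fsubset_leq_card (supp_peel T q0 (ltW d0) h0).
case: Hex => [[a aA e]|[b bB e]].
  by have := card_supp_peel_lt p0 (ltW c0) g0 aA e; lia.
by have := card_supp_peel_lt q0 (ltW d0) h0 bB e; lia.
Qed.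


Lemma peeling_step_Lp p q (b : R) S T g h : 0 < p -> 0 < q -> p^-1 + q^-1 = 1 -> 0 <= b ->
  (forall A B, A != fset0 -> B != fset0 ->
     b * geomean p q #|` A|%:R #|` B|%:R <= #|` sumset3 A B U|%:R) ->
  (forall x, 0 <= g x) -> (forall x, 0 <= h x) -> supp S g != fset0 -> supp T h != fset0 ->
  exists c d, peeling_step p q S T (fun _ _ => True)
    (fun g h => b * geomean p q (sumpow p S g) (sumpow q T h)) g h c d.
Proof.
move=> p0 q0 pq b0 Hb g0 h0 Eg Eh.
have [a0 a0A Ha0] := fset_argmin (fun a => powR (g a) p) Eg.
have [b1 b1B Hb1] := fset_argmin (fun b => powR (h b) q) Eh.
have := Hb _ _ Eg Eh; set A := supp S g in Eg a0A Ha0 *; set B := supp T h in Eh b1B Hb1 *.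
set kA : R := #|` A|%:R; set kB : R := #|` B|%:R => HAB.
set N := sumpow p S g; set M := sumpow q T h.
have kA0 : 0 < kA by rewrite ltr0n cardfs_gt0.
have kB0 : 0 < kB by rewrite ltr0n cardfs_gt0.
have NmA : powR (g a0) p * kA <= N by rewrite mulr_natr; exact: sumpow_ge.
have MnB : powR (h b1) q * kB <= M by rewrite mulr_natr; exact: sumpow_ge.
have [t [/andP[t0 t1] /andP[c0 cm] /andP[d0 dn] Hex]] :=
  uniform_peel_fraction (powR_gt0 p (supp_gt0 a0A)) (powR_gt0 q (supp_gt0 b1B)) kA0 kB0 NmA MnB.
have Pg : peelable p S g (t * N / kA) by split=> // a aA; apply: le_trans cm (Ha0 a aA).
have Ph : peelable q T h (t * M / kB) by split=> // y yB; apply: le_trans dn (Hb1 y yB).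
exists (t * N / kA), (t * M / kB); split=> //.
  by case: Hex => e; [left; exists a0 | right; exists b1]; rewrite // e.
rewrite (sumpow_peel p0 (ltW c0) g0 Pg.2) (sumpow_peel q0 (ltW d0) h0 Ph.2).
rewrite -/N -/M -/A -/B -(mulr_natr (t * N / kA)) -(mulr_natr (t * M / kB)) -/kA -/kB.
have -> : N - t * N / kA * kA = (1 - t) * N by rewrite divfK ?gt_eqF // mulrBl mul1r.
have -> : M - t * M / kB * kB = (1 - t) * M by rewrite divfK ?gt_eqF // mulrBl mul1r.
rewrite geomeanZ ?subr_ge0 ?sumpow_ge0 //.
rewrite {1}(geomean_split pq t0 (sumpow_ge0 p S g) (sumpow_ge0 q T h) kA0 kB0) mulrDr lerD2l.
by rewrite -mulr_natr mulrCA ler_wpM2l ?geomean_ge0.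
Qed.

Lemma sum_fmaxconv_ge_Lp {p q} {b : R} {S T g h} : 0 < p -> 0 < q -> p^-1 + q^-1 = 1 -> 0 <= b ->
  (forall A B, A != fset0 -> B != fset0 ->
     b * geomean p q #|` A|%:R #|` B|%:R <= #|` sumset3 A B U|%:R) ->
  (forall x, 0 <= g x) -> (forall x, 0 <= h x) ->
  b * geomean p q (sumpow p S g) (sumpow q T h) <= \sum_(x <- sumset3 S T U) fmaxconv S T g h x.
Proof.
move=> p0 q0 pq b0 Hb g0 h0.
apply: (sum_fmaxconv_ge_peeling (S := S) (T := T) (Q := fun _ _ => True)
  (Phi := fun g h => b * geomean p q (sumpow p S g) (sumpow q T h)) p0 q0 pq _ _ g h I g0 h0).
  move=> {g h g0 h0} g h _ g0 h0 [] E.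
    by rewrite (sumpow_supp0 p0 g0 E) geomean0l ?mulr0.
  by rewrite (sumpow_supp0 q0 h0 E) geomean0r ?mulr0.
by move=> {g h g0 h0} g h _ g0 h0; apply: peeling_step_Lp.
Qed.

(* [Rel] is [#|A| = #|B|] for [beta'] (equimeasurability) and [A = B] for [beta'']. *)
Definition levels_related (Rel : {fset G} -> {fset G} -> Prop) S T g h :=
  forall t, 0 < t -> Rel (level S g t) (level T h t).

Lemma levels_related_peel Rel S T g h (c : R) : 0 < c ->
  (forall x, 0 <= g x) -> (forall x, 0 <= h x) -> levels_related Rel S T g h ->
  levels_related Rel S T (peel 2 c g) (peel 2 c h).
Proof.
move=> c0 g0 h0 HQ t t0; rewrite !level_peel ?ltW //; apply: HQ.
by rewrite powR_gt0 // addr_gt0 // powR_gt0.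
Qed.

Section EqualLevelCards.
Variables (S T : {fset G}) (g h : G -> R).
Hypothesis cardE : forall t, 0 < t -> #|` level S g t| = #|` level T h t|.

Lemma supp_fset0_level_card : supp T h = fset0 -> supp S g = fset0.
Proof.
move=> E; case: (fset_0Vmem (supp S g)) => [//|[a aA]]; have ga := supp_gt0 aA.
have L0 : level T h (g a) = fset0 by apply/eqP; rewrite -fsubset0 -E level_sub_supp.
have /cardfs0_eq LS : #|` level S g (g a)| = 0%N by rewrite cardE // L0 cardfs0.
by move: (in_fset0 a); rewrite -LS mem_level lexx andbT (fsubsetP (supp_sub S g) a aA).
Qed.

Lemma min_eq_level_card {a0 b0} : a0 \in supp S g -> b0 \in supp T h ->
  (forall a, a \in supp S g -> g a0 <= g a) -> (forall b, b \in supp T h -> h b0 <= h b) ->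
  g a0 = h b0.
Proof.
move=> a0A b0B Ha0 Hb0; have [ga0 hb0] := (supp_gt0 a0A, supp_gt0 b0B).
have lg t : 0 < t -> t <= g a0 -> level S g t = supp S g.
  by move=> t0 tm; apply: level_supp => // a aA; apply: le_trans tm (Ha0 a aA).
have lh t : 0 < t -> t <= h b0 -> level T h t = supp T h.
  by move=> t0 tm; apply: level_supp => // b bB; apply: le_trans tm (Hb0 b bB).
have cardAB : #|` supp S g| = #|` supp T h|.
  have t0 : 0 < Num.min (g a0) (h b0) by rewrite lt_min ga0.
  by rewrite -(lg _ t0) ?ge_min ?lexx // -(lh _ t0) ?ge_min ?lexx ?orbT // cardE.
apply/eqP; rewrite eq_le; apply/andP; split; rewrite leNgt; apply/negP => lt.
  have := card_level_lt ga0 b0B lt; rewrite -(cardE _ ga0) (lg _ ga0 (lexx _)).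
  by rewrite cardAB ltnn.
have := card_level_lt hb0 a0A lt; rewrite (cardE _ hb0) (lh _ hb0 (lexx _)).
by rewrite cardAB ltnn.
Qed.

End EqualLevelCards.
Arguments supp_fset0_level_card {S T g h}.
Arguments min_eq_level_card {S T g h} cardE {a0 b0}.

Lemma peeling_step_levels Rel (b : R) S T g h :
  (forall A B, Rel A B -> #|` A| = #|` B|) -> 0 <= b ->
  (forall A B, A != fset0 -> B != fset0 -> Rel A B -> b * #|` A|%:R <= #|` sumset3 A B U|%:R) ->
  (forall x, 0 <= g x) -> (forall x, 0 <= h x) -> levels_related Rel S T g h ->
  supp S g != fset0 -> supp T h != fset0 ->
  exists c d, peeling_step 2 2 S T (levels_related Rel S T) (fun g _ => b * sumpow 2 S g) g h c d.
Proof.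
move=> RelE b0 Hb g0 h0 HQ Eg Eh.
have cardE t : 0 < t -> #|` level S g t| = #|` level T h t| by move=> t0; exact/RelE/HQ.
have [a0 a0A Ha0] := fset_argmin g Eg; have [b1 b1B Hb1] := fset_argmin h Eh.
have two : (0 : R) < 2 by [].
have ga0 := supp_gt0 a0A; have gh := min_eq_level_card cardE a0A b1B Ha0 Hb1.
have RAB : Rel (supp S g) (supp T h).
  have -> : supp T h = level T h (g a0) by rewrite level_supp // => y yB; rewrite gh Hb1.
  by rewrite -(@level_supp S g (g a0)) //; exact: HQ.
set c := powR (g a0) 2; have c0 : 0 < c by rewrite powR_gt0.
have mono (x y : R) : 0 <= x -> x <= y -> powR x 2 <= powR y 2.
  by move=> x0 xy; rewrite (gt0_ler_powR_mono _) ?nnegrE // (le_trans x0).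
have Pg : peelable 2 S g c by split=> // a aA; rewrite mono ?Ha0 ?g0.
have Ph : peelable 2 T h c by split=> // y yB; rewrite /c gh mono ?Hb1 ?h0.
exists c, c; split=> //; first by left; exists a0.
  exact: levels_related_peel.
rewrite (sumpow_peel two (ltW c0) g0 Pg.2) geomean2_id ?(ltW c0) //.
rewrite mulrBr -addrA lerDl addrC subr_ge0 -!(mulr_natr c) mulrCA ler_wpM2l ?(ltW c0) //.
exact: Hb.
Qed.

Lemma sum_fmaxconv_ge_levels {Rel} {b : R} {S T g h} :
  (forall A B, Rel A B -> #|` A| = #|` B|) -> 0 <= b ->
  (forall A B, A != fset0 -> B != fset0 -> Rel A B -> b * #|` A|%:R <= #|` sumset3 A B U|%:R) ->
  (forall x, 0 <= g x) -> (forall x, 0 <= h x) -> levels_related Rel S T g h ->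
  b * sumpow 2 S g <= \sum_(x <- sumset3 S T U) fmaxconv S T g h x.
Proof.
move=> RelE b0 Hb g0 h0 HQ; have two : (0 : R) < 2 by [].
apply: (sum_fmaxconv_ge_peeling (S := S) (T := T) (Q := levels_related Rel S T)
  (Phi := fun g _ => b * sumpow 2 S g) two two (conjugate2 R) _ _ g h HQ g0 h0).
  move=> {g h g0 h0 HQ} g h HQ g0 h0.
  case=> [|/(supp_fset0_level_card (fun t t0 => RelE _ _ (HQ t t0)))] E;
  by rewrite (sumpow_supp0 two g0 E) mulr0.
by move=> {g h g0 h0 HQ} g h HQ g0 h0; apply: peeling_step_levels.
Qed.

Section Norms.
Local Open Scope classical_set_scope.

Lemma lpnorm_mul_le p q g h (k l : R) : 0 < p -> 0 < q ->
  (forall x, 0 <= g x) -> (forall x, 0 <= h x) -> 0 <= k ->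
  (forall X Y, k * geomean p q (sumpow p X g) (sumpow q Y h) <= l) ->
  k * (lpnorm p g * lpnorm q h) <= l.
Proof.
move=> p0 q0 g0 h0 k0 H; have Lg0 : 0 <= lpnorm p g by exact: powR_ge0.
rewrite mulrA; apply: (mul_powR_fine_esum_le (fun x => powR (h x) q)) => [x|||Y];
  [exact: powR_ge0 | exact: mulr_ge0 | by rewrite invr_gt0 |].
rewrite mulrAC; apply: (mul_powR_fine_esum_le (fun x => powR (g x) p)) => [x|||X];
  [exact: powR_ge0 | by rewrite mulr_ge0 ?powR_ge0 | by rewrite invr_gt0 |].
by rewrite mulrAC -mulrA; exact: H.
Qed.

Lemma mem_fset_set_level g (e : R) x : admissible g -> 0 < e ->
  (x \in fset_set [set y | e <= g y]) = (e <= g x).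
Proof.
move=> ag e0; rewrite (in_fset_set (admissible_level_finite ag e0)).
by apply/idP/idP => [/set_mem //|H]; apply: mem_set.
Qed.

Lemma level_fset_set g (e t : R) : admissible g -> 0 < e -> 0 < t ->
  level (fset_set [set y | e <= g y]) g t = fset_set [set y | Num.max e t <= g y].
Proof.
move=> ag e0 t0; have et0 : 0 < Num.max e t by rewrite lt_max e0.
by apply/fsetP => x; rewrite mem_level !mem_fset_set_level // ge_max.
Qed.

Section LevelRelatedLowerBound.
Variables (Rel : {fset G} -> {fset G} -> Prop) (b : R).
Hypothesis RelE : forall A B, Rel A B -> #|` A| = #|` B|.
Hypothesis b0 : 0 <= b.
Hypothesis Hb : forall A B, A != fset0 -> B != fset0 -> Rel A B ->
  b * #|` A|%:R <= #|` sumset3 A B U|%:R.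

Lemma sumpow2_le_levels {g h} {l : R} : admissible g -> admissible h ->
  (forall t, 0 < t -> Rel (fset_set [set x | t <= g x]) (fset_set [set x | t <= h x])) ->
  (forall S T, \sum_(x <- sumset3 S T U) fmaxconv S T g h x <= l) ->
  forall X, b * sumpow 2 X g <= l.
Proof.
move=> ag ah Hrel HF X; have two : (0 : R) < 2 by [].
have [E|E] := eqVneq (supp X g) fset0.
  rewrite (sumpow_supp0 two ag.1 E) mulr0; apply: le_trans (HF fset0 fset0).
  by apply: sumr_ge0 => x _; exact: fmaxconv_ge0.
have [a0 a0A Ha0] := fset_argmin g E; have e0 := supp_gt0 a0A.
set S := fset_set [set x | g a0 <= g x]; set T := fset_set [set x | g a0 <= h x].
have HQ : levels_related Rel S T g h.
  by move=> t t0; rewrite !level_fset_set //; apply: Hrel; rewrite lt_max e0.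
apply: le_trans (HF S T); apply: le_trans (sum_fmaxconv_ge_levels RelE b0 Hb ag.1 ah.1 HQ).
rewrite ler_wpM2l // (sumpow_supp two ag.1) /sumpow; apply: ler_sum_fsubset => [|x].
  by apply/fsubsetP => x xA; rewrite mem_fset_set_level // Ha0.
exact: powR_ge0.
Qed.

Hypothesis RelC : forall A B, Rel A B -> Rel B A.

Lemma lpnorm2_mul_le_levels {g h} {l : R} : admissible g -> admissible h ->
  (forall t, 0 < t -> Rel (fset_set [set x | t <= g x]) (fset_set [set x | t <= h x])) ->
  l1norm (maxconv (maxconv (indic R U) g) h) = l%:E ->
  b * (lpnorm 2 g * lpnorm 2 h) <= l.
Proof.
move=> ag ah Hrel Ll.
apply: lpnorm_mul_le => //; [exact: ag.1 | exact: ah.1 | move=> X Y].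
have Ng := sumpow2_le_levels ag ah Hrel (fun S T => sum_fmaxconv_le S T ag ah Ll) X.
have Nh : b * sumpow 2 Y h <= l.
  apply: (sumpow2_le_levels ah ag) => [t t0|S T]; first exact/RelC/Hrel.
  by rewrite sumset3C (eq_bigr _ (fun x _ => fmaxconvC _ _ _ _ x)) sum_fmaxconv_le.
apply: le_trans (_ : b * Num.max (sumpow 2 X g) (sumpow 2 Y h) <= l).
  by rewrite ler_wpM2l // geomean_le_max ?sumpow_ge0 ?conjugate2.
by rewrite maxr_pMr // ge_max Ng Nh.
Qed.

End LevelRelatedLowerBound.

End Norms.

Section Infima.
Local Open Scope classical_set_scope.

Lemma ereal_inf_EFin (E : set (\bar R)) : (exists r : R, E r%:E) ->
  (forall x, E x -> 0 <= x)%E -> exists2 b : R, ereal_inf E = b%:E & 0 <= b.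
Proof.
move=> [r Er] E0; have i0 : (0 <= ereal_inf E)%E by apply: le_ereal_inf_tmp.
have ifin : (ereal_inf E < +oo)%E := le_lt_trans (ereal_inf_lbound Er) (ltry r).
by exists (fine (ereal_inf E)); rewrite ?fineK ?fine_ge0 // ge0_fin_numE.
Qed.

Lemma EFin_le_mul_invr (b D : R) (L : \bar R) : 0 < D -> (0 <= L)%E ->
  (forall l, L = l%:E -> b * D <= l) -> (b%:E <= L * (D^-1)%:E)%E.
Proof.
move=> D0 L0 H; have [Lfin|Linf] := boolP (L \is a fin_num).
  by rewrite -(fineK Lfin) -EFinM lee_fin ler_pdivlMr // H // fineK.
have -> : L = +oo%E by move: Linf; rewrite ge0_fin_numE // -leNgt leye_eq => /eqP.
by rewrite gt0_mulye ?leey // lte_fin invr_gt0.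
Qed.

Lemma l1norm_maxconv_indic_ge0 g h : admissible g -> admissible h ->
  (0 <= l1norm (maxconv (maxconv (indic R U) g) h))%E.
Proof. by move=> ag ah; apply: esum_ge0 => x _; rewrite lee_fin maxconv_indic_ge0. Qed.

Lemma beta_p_le_gamma_p p : 1 < p -> (beta_p p U <= gamma_p p (indic R U))%E.
Proof.
move=> p1; have [p0 q0 pq qV] := conjugate_exponent p1.
set q := p / (p - 1) in q0 pq qV.
have den0 A B : A != fset0 -> B != fset0 -> 0 < geomean p q #|` A|%:R #|` B|%:R.
  by move=> nA nB; rewrite mulr_gt0 // powR_gt0 // ltr0n cardfs_gt0.
have [b Eb b0] : exists2 b : R, beta_p p U = b%:E & 0 <= b.
  apply: ereal_inf_EFin => [|_ [A [B [nA [nB ->]]]]].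
    by eexists; exists [fset 0], [fset 0]; rewrite !fset1_neq0.
  by rewrite lee_fin divr_ge0 // ltW // -qV den0.
have Hb A B : A != fset0 -> B != fset0 ->
    b * geomean p q #|` A|%:R #|` B|%:R <= #|` sumset3 A B U|%:R.
  move=> nA nB; rewrite -ler_pdivlMr ?den0 // -lee_fin -Eb /geomean qV.
  by apply: ereal_inf_lbound; exists A, B.
rewrite Eb; apply: le_ereal_inf_tmp => _ [g [h [ag [ah ->]]]].
apply: EFin_le_mul_invr => [||l Ll]; last 1 first.
- apply: lpnorm_mul_le => //; [exact: ag.1 | exact: ah.1 | move=> X Y].
  exact: le_trans (sum_fmaxconv_ge_Lp p0 q0 pq b0 Hb ag.1 ah.1) (sum_fmaxconv_le X Y ag ah Ll).
- have q1 : 1 <= q by rewrite /q ler_pdivlMr ?subr_gt0 // mul1r gerBl.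
  by rewrite mulr_gt0 // powR_gt0 // admissible_powR_gt0 // ltW.
exact: l1norm_maxconv_indic_ge0.
Qed.

Lemma beta'_le_gamma' : (beta' R U <= gamma' (indic R U))%E.
Proof.
have [b Eb b0] : exists2 b : R, beta' R U = b%:E & 0 <= b.
  apply: ereal_inf_EFin => [|_ [A [B [nA [nB [eAB ->]]]]]].
    by eexists; exists [fset 0], [fset 0]; rewrite !fset1_neq0.
  by rewrite lee_fin divr_ge0 // sqrtr_ge0.
have Hb A B : A != fset0 -> B != fset0 -> #|` A| = #|` B| ->
    b * #|` A|%:R <= #|` sumset3 A B U|%:R.
  move=> nA nB eAB; rewrite -ler_pdivlMr ?ltr0n ?cardfs_gt0 // -lee_fin -Eb.
  have -> : #|` A|%:R = Num.sqrt (#|` A|%:R * #|` B|%:R) :> R.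
    by rewrite -eAB -expr2 sqrtr_sqr ger0_norm.
  by apply: ereal_inf_lbound; exists A, B.
rewrite Eb; apply: le_ereal_inf_tmp => _ [g [h [ag [ah [gh ->]]]]].
apply: EFin_le_mul_invr => [||l Ll]; last 1 first.
- have Hrel t : 0 < t ->
      #|` fset_set [set x | t <= g x]| = #|` fset_set [set x | t <= h x]|.
    move=> t0; apply/(fcard_eq (admissible_level_finite ag t0) (admissible_level_finite ah t0)).
    exact: gh.
  exact: (lpnorm2_mul_le_levels (fun A B : {fset G} => #|` A| = #|` B|) b (fun _ _ e => e) b0 Hb
    (fun _ _ => esym) ag ah Hrel Ll).
- by rewrite mulr_gt0 // powR_gt0 // admissible_powR_gt0 // ler1n.
exact: l1norm_maxconv_indic_ge0.
Qed.

Lemma beta''_le_gamma'' : (beta'' R U <= gamma'' (indic R U))%E.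
Proof.
have [b Eb b0] : exists2 b : R, beta'' R U = b%:E & 0 <= b.
  apply: ereal_inf_EFin => [|_ [A [nA ->]]]; last by rewrite lee_fin divr_ge0.
  by eexists; exists [fset 0]; rewrite fset1_neq0.
have Hb A B : A != fset0 -> B != fset0 -> A = B -> b * #|` A|%:R <= #|` sumset3 A B U|%:R.
  move=> nA _ <-; rewrite -ler_pdivlMr ?ltr0n ?cardfs_gt0 // -lee_fin -Eb.
  by apply: ereal_inf_lbound; exists A.
rewrite Eb; apply: le_ereal_inf_tmp => _ [g [ag ->]].
apply: EFin_le_mul_invr => [||l Ll]; last 1 first.
- have RelE (A B : {fset G}) : A = B -> #|` A| = #|` B| by move->.
  by rewrite expr2; exact: (lpnorm2_mul_le_levels eq b RelE b0 Hb (fun _ _ => esym) ag ag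
    (fun _ _ => erefl) Ll).
- by rewrite expr2 mulr_gt0 // powR_gt0 // admissible_powR_gt0 // ler1n.
exact: l1norm_maxconv_indic_ge0.
Qed.

End Infima.

Section IndicatorWitnesses.
Local Open Scope classical_set_scope.

Lemma l1norm_maxconv_indic_sumset3 A B :
  l1norm (maxconv (maxconv (indic R U) (indic R A)) (indic R B)) = (#|` sumset3 A B U|%:R)%:E.
Proof. by rewrite !maxconv_indic l1norm_indic sumset3E [fsumset _ U]fsumsetC fsumsetA. Qed.

Lemma gamma_p_le_beta_p p : 1 < p -> (gamma_p p (indic R U) <= beta_p p U)%E.
Proof.
move=> p1; have [p0 q0 _ qV] := conjugate_exponent p1.
rewrite /gamma_p /=; apply: le_ereal_inf_tmp => _ [A [B [nA [nB ->]]]].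
apply: ereal_inf_lbound; exists (indic R A), (indic R B).
do 2 (split; first exact: admissible_indic).
by rewrite l1norm_maxconv_indic_sumset3 !lpnorm_indic // qV -EFinM.
Qed.

Lemma gamma'_le_beta' : (gamma' (indic R U) <= beta' R U)%E.
Proof.
apply: le_ereal_inf_tmp => _ [A [B [nA [nB [eAB ->]]]]].
apply: ereal_inf_lbound; exists (indic R A), (indic R B).
do 2 (split; first exact: admissible_indic); split; first exact: ident_distr_indic.
by rewrite l1norm_maxconv_indic_sumset3 !lpnorm_indic // -EFinM -powRM // powR12_sqrt // mulr_ge0.
Qed.

Lemma gamma''_le_beta'' : (gamma'' (indic R U) <= beta'' R U)%E.
Proof.
apply: le_ereal_inf_tmp => _ [A [nA ->]].
apply: ereal_inf_lbound; exists (indic R A); split; first exact: admissible_indic.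
have -> : lpnorm 2 (indic R A) ^+ 2 = #|` A|%:R.
  by rewrite lpnorm_indic // expr2; exact: (@geomean2_id R #|` A|%:R (ler0n _ _)).
by rewrite l1norm_maxconv_indic_sumset3 -EFinM.
Qed.

End IndicatorWitnesses.

End SumsetsAndMaxConvolutions.

Theorem mainTheorem9 (R : realType) (G : zmodType) (U : {fset G}) (p : R) :
  1 < p ->
  beta_p p U = gamma_p p (indic R U) /\
  beta' R U = gamma' (indic R U) /\
  beta'' R U = gamma'' (indic R U).
Proof.
move=> p1; split; [|split]; apply/eqP; rewrite eq_le; apply/andP; split.
- exact: beta_p_le_gamma_p.
- exact: gamma_p_le_beta_p.
- exact: beta'_le_gamma'.
- exact: gamma'_le_beta'.
- exact: beta''_le_gamma''.
- exact: gamma''_le_beta''.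
Qed.
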